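(* Let $(V,\|\cdot\|)$ be a Banach space. Then $V$ admits exactly one conical bicombing, namely the one given by linear segments, $\sigma(x,y,t)=(1-t)x+ty$.
   Context: A bicombing on a metric space $(X,d)$ is a map $\sigma\colon X\times X\times[0,1]\to X$ such that each $\sigma_{xy}:=\sigma(x,y,\cdot)$ is a geodesic from $x$ to $y$ ($\sigma_{xy}(0)=x$, $\sigma_{xy}(1)=y$, $d(\sigma_{xy}(s),\sigma_{xy}(t))=|s-t|d(x,y)$). It is conical if $d(\sigma_{xy}(t),\sigma_{x'y'}(t))\le(1-t)d(x,x')+t\,d(y,y')$ for all $x,y,x',y'\in X$ and $t\in[0,1]$. The Banach space carries the metric $d(x,y)=\|x-y\|$. *)

From HB Require Import structures.
From mathcomp Require Import all_boot all_order all_algebra.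
From mathcomp Require Import all_classical all_reals all_analysis.
Set Implicit Arguments. Unset Strict Implicit. Unset Printing Implicit Defensive.
Import Order.TTheory GRing.Theory Num.Theory.
Import numFieldNormedType.Exports.
Local Open Scope ring_scope.

(* A bicombing on a normed space V (metric d(x,y) = `|x - y|) is represented
   as a map sigma : V -> V -> R -> V; only its values for t in [0,1] matter. *)

Definition is_geodesic (R : realType) (V : normedModType R)
  (x y : V) (g : R -> V) : Prop :=
  g 0 = x /\ g 1 = y /\
  forall s t : R, 0 <= s <= 1 -> 0 <= t <= 1 ->
    `|g s - g t| = `|s - t| * `|x - y|.

Definition is_bicombing (R : realType) (V : normedModType R)
  (sigma : V -> V -> R -> V) : Prop :=
  forall x y : V, is_geodesic x y (sigma x y).

Definition is_conical (R : realType) (V : normedModType R)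
  (sigma : V -> V -> R -> V) : Prop :=
  forall (x y x' y' : V) (t : R), 0 <= t <= 1 ->
    `|sigma x y t - sigma x' y' t| <= (1 - t) * `|x - x'| + t * `|y - y'|.

Definition conical_bicombing (R : realType) (V : normedModType R)
  (sigma : V -> V -> R -> V) : Prop :=
  is_bicombing sigma /\ is_conical sigma.

Definition linear_bicombing (R : realType) (V : normedModType R)
  : V -> V -> R -> V :=
  fun x y t => (1 - t) *: x + t *: y.

From HB Require Import structures.
From mathcomp Require Import all_boot all_order all_algebra.
From mathcomp Require Import all_classical all_reals all_analysis.
From mathcomp Require Import ring lra.
Import Order.TTheory GRing.Theory Num.Theory.
Import numFieldNormedType.Exports.
Local Open Scope ring_scope.

(* Fix [x], [y], [0 < t <= 1] and let [e] be the error [sigma x y t - ((1-t)x + ty)].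
   Moving the starting point from [x] to [x - a e] changes [sigma _ y t] by at most
   [(1-t) a |e|] (conicality), while [sigma _ y t] stays at distance [t |y - x + a e|]
   from the new starting point (geodesic). The triangle inequality then shows that
   [s |-> |y - x + s e| - s |e|], which is bounded below by [-|y - x|], drops by at
   least [|e|/t] when [a] is replaced by [(1 + a)/t]. Iterating forces [e = 0]. *)

Lemma natrM_bounded_le0 (R : archiRealFieldType) (c b : R) :
  (forall n : nat, n%:R * c <= b) -> c <= 0.
Proof.
move=> bounded; rewrite leNgt; apply/negP => c_gt0.
have b_ge0 : 0 <= b by have := bounded 0%N; rewrite mul0r.
have := archi_boundP (divr_ge0 b_ge0 (ltW c_gt0)).
by rewrite ltr_pdivrMr // ltNge bounded.
Qed.

Section NormedSpace.
Variables (R : realType) (V : normedModType R).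

Lemma linear_bicombingE (x y : V) (t : R) :
  linear_bicombing x y t = x + t *: (y - x).
Proof. by rewrite /linear_bicombing scalerBl scale1r scalerBr addrAC addrA. Qed.

Lemma linear_bicombing_is_bicombing : is_bicombing (@linear_bicombing R V).
Proof.
move=> x y; rewrite /is_geodesic /linear_bicombing; split; last split.
- by rewrite subr0 scale1r scale0r addr0.
- by rewrite subrr scale0r add0r scale1r.
move=> s t _ _.
have -> : (1 - s) *: x + s *: y - ((1 - t) *: x + t *: y) = (s - t) *: (y - x).
  by rewrite opprD addrACA -!scalerBl scalerBr addrC -scaleNr; congr (_ + _ *: _); ring.
by rewrite normrZ (distrC y x).
Qed.

Lemma linear_bicombing_is_conical : is_conical (@linear_bicombing R V).
Proof.
move=> x y x' y' t /andP[t_ge0 t_le1]; rewrite /linear_bicombing.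
rewrite opprD addrACA -!scalerBr.
apply: le_trans (ler_normD _ _) _.
by rewrite !normrZ !ger0_norm ?subr_ge0.
Qed.

Lemma linear_bicombing_conical : conical_bicombing (@linear_bicombing R V).
Proof.
by split; [exact: linear_bicombing_is_bicombing | exact: linear_bicombing_is_conical].
Qed.

Definition slack (v e : V) (s : R) : R := `|v + s *: e| - s * `|e|.

Lemma slack_ge (v e : V) (s : R) : 0 <= s -> - `|v| <= slack v e s.
Proof.
move=> s_ge0; have := lerB_normD (s *: e) v.
by rewrite /slack normrZ ger0_norm // [s *: e + v]addrC; lra.
Qed.

End NormedSpace.

Arguments slack {R V}.
Arguments slack_ge {R V}.

Section ConicalBicombing.
Variables (R : realType) (V : normedModType R) (sigma : V -> V -> R -> V).

Lemma bicombing_dist_start (x y : V) (t : R) : is_bicombing sigma ->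
  0 <= t <= 1 -> `|sigma x y t - x| = t * `|x - y|.
Proof.
move=> bicomb t01; have [start_x [_ dist]] := bicomb x y.
have := dist t 0 t01; rewrite lexx ler01 => /(_ isT).
by rewrite start_x subr0 ger0_norm //; case/andP: t01.
Qed.

Lemma conical_common_end (x x' y : V) (t : R) : is_conical sigma ->
  0 <= t <= 1 -> `|sigma x y t - sigma x' y t| <= (1 - t) * `|x - x'|.
Proof. by move=> conical /(conical x y x' y); rewrite subrr normr0 mulr0 addr0. Qed.

Hypothesis sigma_conical : conical_bicombing sigma.
Variables (x y : V) (t : R).
Hypotheses (t_gt0 : 0 < t) (t_le1 : t <= 1).

Let e := sigma x y t - linear_bicombing x y t.
Let v := y - x.
Let shift (a : R) : R := (1 + a) / t.

Lemma shifted_start_ineq (a : R) : 0 <= a ->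
  t * `|v + shift a *: e| <= (1 - t) * (a * `|e|) + t * `|v + a *: e|.
Proof.
move=> a_ge0; have [bicomb conical] := sigma_conical.
have t01 : 0 <= t <= 1 by rewrite ltW.
set x' := x - a *: e.
set p := sigma x y t; set q := sigma x' y t.
have p_q : `|p - q| <= (1 - t) * (a * `|e|).
  apply: le_trans (conical_common_end x x' y t conical t01) _.
  by rewrite /x' opprB addrCA subrr addr0 normrZ ger0_norm.
have q_x' : `|q - x'| = t * `|v + a *: e|.
  by rewrite bicombing_dist_start // distrC /x' /v opprB addrA addrAC.
have p_x' : t *: (v + shift a *: e) = (p - q) + (q - x').
  rewrite subrKA /shift scalerDr scalerA mulrCA divff ?gt_eqF // mulr1.
  rewrite /x' /p -[sigma x y t](subrK (linear_bicombing x y t)) -/e.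
  rewrite linear_bicombingE -/v scalerDl scale1r opprB.
  by rewrite addrACA [x + _ - x]addrAC subrr add0r addrC.
rewrite -[t in t * _](ger0_norm (ltW t_gt0)) -normrZ p_x' -q_x'.
by apply: le_trans (ler_normD _ _) _; rewrite lerD2r.
Qed.

Lemma slack_step (a : R) : 0 <= a -> slack v e (shift a) <= slack v e a - `|e| / t.
Proof.
move=> /shifted_start_ineq ineq.
rewrite /slack -(ler_pM2l t_gt0).
set N := `|v + shift a *: e| in ineq *.
set M := `|v + a *: e| in ineq *; set E := `|e| in ineq *.
have -> : t * (N - shift a * E) = t * N - (1 + a) * E by rewrite /shift; field; rewrite gt_eqF.
have -> : t * (M - a * E - E / t) = t * M - t * (a * E) - E by field; rewrite gt_eqF.
lra.
Qed.

Lemma iter_shift_ge0 (n : nat) : 0 <= iter n shift 0.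
Proof.
by elim: n => [|n IHn] //=; rewrite divr_ge0 ?addr_ge0 // ltW.
Qed.

Lemma slack_iter_shift (n : nat) :
  slack v e (iter n shift 0) <= `|v| - n%:R * (`|e| / t).
Proof.
elim: n => [|n IHn] /=; first by rewrite /slack scale0r addr0 !mul0r !subr0.
apply: le_trans (slack_step _ (iter_shift_ge0 n)) _.
by rewrite -natr1 mulrDl mul1r opprD addrA lerD2r.
Qed.

Lemma conical_bicombing_eq_linear_gt0 : sigma x y t = linear_bicombing x y t.
Proof.
have bounded (n : nat) : n%:R * (`|e| / t) <= 2 * `|v|.
  have := slack_ge v e _ (iter_shift_ge0 n); have := slack_iter_shift n; lra.
have := natrM_bounded_le0 _ _ _ bounded.
rewrite pmulr_lle0 ?invr_gt0 // normr_le0 subr_eq0.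
exact/eqP.
Qed.

End ConicalBicombing.

Lemma conical_bicombing_eq_linear (R : realType) (V : normedModType R)
    (sigma : V -> V -> R -> V) (x y : V) (t : R) :
  conical_bicombing sigma -> 0 <= t <= 1 -> sigma x y t = linear_bicombing x y t.
Proof.
move=> sigma_conical /andP[t_ge0 t_le1].
have [->|t_neq0] := eqVneq t 0.
  have [start_x _] := sigma_conical.1 x y.
  by rewrite start_x /linear_bicombing subr0 scale1r scale0r addr0.
by apply: conical_bicombing_eq_linear_gt0; rewrite // lt_def t_neq0.
Qed.

Theorem proposition3p3 (R : realType) (V : completeNormedModType R) :
  conical_bicombing (@linear_bicombing R V) /\
  forall sigma : V -> V -> R -> V, conical_bicombing sigma ->
    forall (x y : V) (t : R), 0 <= t <= 1 ->
      sigma x y t = linear_bicombing x y t.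
Proof.
split; first exact: linear_bicombing_conical.
move=> sigma sigma_conical x y t; exact: conical_bicombing_eq_linear.
Qed.
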